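(* Let $B \subset \mathbb{R}^3$ be an open ball and let $\hat{P} \in \mathbb{R}^3 \setminus B$. Then: (i) if $\hat{P}' \in C^+(B,\hat{P})$, then $\mathrm{cl}(C^+(B,\hat{P}')) \subset C^+(B,\hat{P})$; (ii) if $\hat{P}' \in C^+(B,\hat{P})$ and $\eta \in \mathbb{R}^3$ satisfies $\hat{P}' + \eta \in C^+(B,\hat{P}')$, then $\hat{P} + \eta \in C^+(B,\hat{P})$; (iii) if $\hat{P}' \in C^+_0(B,\hat{P})$, then $C^+(B,\hat{P}') \subset C^+(B,\hat{P})$.
   Context: For a bounded convex set $B \subset \mathbb{R}^3$ and a point $Q \in \mathbb{R}^3$ with $Q \notin B$, the positive half-cone $C^+(B,Q)$ is the set of points $Y \in \mathbb{R}^3$ for which there exist $x' \in B$ and $\alpha > 0$ such that $Y - Q = \alpha (Q - x')$, and $C^+_0(B,Q) := C^+(B,Q) \cup \{Q\}$. Here $\mathrm{cl}(S)$ denotes the topological closure of $S$. *)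

From HB Require Import structures.
From mathcomp Require Import all_boot all_order all_algebra.
From mathcomp Require Import all_classical all_reals all_analysis.
Set Implicit Arguments. Unset Strict Implicit. Unset Printing Implicit Defensive.
Import Order.TTheory GRing.Theory Num.Theory.
Import numFieldNormedType.Exports.
Local Open Scope classical_set_scope.
Local Open Scope ring_scope.

Definition eucl_ball (R : realType) (c : 'rV[R]_3) (r : R) : set 'rV[R]_3 :=
  [set x | \sum_(i < 3) (x ord0 i - c ord0 i) ^+ 2 < r ^+ 2].

Definition half_cone (R : realType) (B : set 'rV[R]_3) (Q : 'rV[R]_3) : set 'rV[R]_3 :=
  [set Y | exists x', B x' /\ exists alpha : R, 0 < alpha /\ Y - Q = alpha *: (Q - x')].

Definition half_cone0 (R : realType) (B : set 'rV[R]_3) (Q : 'rV[R]_3) : set 'rV[R]_3 :=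
  half_cone B Q `|` [set Q].

(* For a convex set B the directions a (P - x), with a > 0 and x in B, form a
   convex cone: a (P - x) + b (P - y) = (a + b) (P - z) for the weighted mean z
   of x and y.  If P' lies in C^+(B,P), every direction P' - x' of C^+(B,P') is
   the sum (P' - P) + (P - x') of two such directions, which gives (ii) and
   (iii).  When B is open, so is C^+(B,P); hence a small perturbation of the
   apex P' stays in C^+(B,P) and absorbs the error made when approximating a
   point of the closure of C^+(B,P'), which gives (i). *)

From HB Require Import structures.
From mathcomp Require Import all_boot all_order all_algebra.
From mathcomp Require Import all_classical all_reals all_analysis.
From mathcomp Require Import ring lra.
Import Order.TTheory GRing.Theory Num.Theory.
Import numFieldNormedType.Exports.
Local Open Scope classical_set_scope.
Local Open Scope ring_scope.
Local Open Scope convex_scope.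

Lemma scaler_sub_wmean (R : fieldType) (V : lmodType R) (a b : R) (q x y : V) :
  a + b != 0 ->
  (a + b) *: (q - (a + b)^-1 *: (a *: x + b *: y)) = a *: (q - x) + b *: (q - y).
Proof.
move=> ab0; rewrite scalerBr scalerA mulfV // scale1r scalerDl !scalerBr.
by rewrite opprD addrACA.
Qed.

Lemma convex_set_wmean (R : numFieldType) (V : lmodType R) (A : set V)
    (a b : R) (x y : V) :
  convex_set A -> A x -> A y -> 0 < a -> 0 < b ->
  A ((a + b)^-1 *: (a *: x + b *: y)).
Proof.
move=> convA Ax Ay a0 b0.
have ab0 : 0 < a + b by rewrite addr_gt0.
have t0 : 0 <= a / (a + b) by rewrite divr_ge0 ?ltW.
have t1 : a / (a + b) <= 1 by rewrite ler_pdivrMr // mul1r lerDl ltW.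
have := convA x y (Itv01 t0 t1); rewrite !inE => /(_ Ax Ay).
have -> : (x : convex_lmodType V) <| Itv01 t0 t1 |> y
          = a / (a + b) *: x + (1 - a / (a + b)) *: y :> V by [].
have -> : 1 - a / (a + b) = b / (a + b).
  by apply: (canLR (addrK _)); rewrite -mulrDl addrC divff ?gt_eqF.
by rewrite scalerDr !scalerA ![_ * (a + b)^-1]mulrC.
Qed.

Section EuclBall.
Context {R : realType} (c : 'rV[R]_3) (r : R).

Lemma convex_eucl_ball : convex_set (eucl_ball c r).
Proof.
apply/convex_setW => x y; rewrite !inE /eucl_ball /= => xB yB t t0 t1.
rewrite inE /=; set s := t%:num in t0 t1 *.
have -> : x <| t |> y = s *: x + (1 - s) *: y :> 'rV_3 by [].
have sqr_convex u v : (s * u + (1 - s) * v) ^+ 2 <= s * u ^+ 2 + (1 - s) * v ^+ 2.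
  rewrite -subr_ge0 (_ : _ - _ = s * (1 - s) * (u - v) ^+ 2); last by ring.
  by rewrite mulr_ge0 ?sqr_ge0 ?mulr_ge0 ?subr_ge0 ?ltW.
set X := \sum_(i < 3) _ in xB; set Y := \sum_(i < 3) _ in yB.
apply: (@le_lt_trans _ _ (s * X + (1 - s) * Y)); last by nra.
rewrite !mulr_sumr -big_split /=; apply: ler_sum => i _.
rewrite !mxE (_ : _ - _ = s * (x ord0 i - c ord0 i) + (1 - s) * (y ord0 i - c ord0 i)).
  exact: sqr_convex.
by ring.
Qed.

Lemma open_eucl_ball : open (eucl_ball c r).
Proof.
pose f (x : 'rV[R]_3) := \sum_(i < 3) (x ord0 i - c ord0 i) ^+ 2.
have f_cont : continuous f.
  apply: continuous_big => [|i _ x]; first exact: add_continuous.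
  apply: (@continuous_comp _ _ _ (fun x : 'rV[R]_3 => x ord0 i - c ord0 i)
                                 (fun z : R => z ^+ 2)).
    by apply: continuousB; [exact: coord_continuous | exact: cst_continuous].
  exact: exprn_continuous.
apply: (open_comp (f := f) (D := [set z | z < r ^+ 2])) => [x _|].
  exact: f_cont.
exact: open_lt.
Qed.

End EuclBall.

Section HalfCone.
Context {R : realType} (B : set 'rV[R]_3).
Hypothesis convB : convex_set B.
Implicit Types (P Y x : 'rV[R]_3).

Lemma half_coneD P u v :
  half_cone B P (P + u) -> half_cone B P (P + v) -> half_cone B P (P + (u + v)).
Proof.
rewrite /half_cone /= !(addrC P) !addrK.
move=> [x [Bx [a [a0 ->]]]] [y [By [b [b0 ->]]]].
have ab0 : 0 < a + b by rewrite addr_gt0.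
exists ((a + b)^-1 *: (a *: x + b *: y)); split; first exact: convex_set_wmean.
by exists (a + b); rewrite scaler_sub_wmean ?gt_eqF.
Qed.

Lemma half_coneZ P t u :
  0 < t -> half_cone B P (P + u) -> half_cone B P (P + t *: u).
Proof.
rewrite /half_cone /= !(addrC P) !addrK => t0 [x [Bx [a [a0 ->]]]].
by exists x; split => //; exists (t * a); rewrite scalerA mulr_gt0.
Qed.

Lemma half_cone_reflect P x : B x -> half_cone B P (P + (P - x)).
Proof. by exists x; split => //; exists 1; rewrite scale1r (addrC P) addrK. Qed.

Lemma half_cone_apex_dir P P' x :
  half_cone B P P' -> B x -> half_cone B P (P + (P' - x)).
Proof.
move=> PP' Bx; have -> : P' - x = (P' - P) + (P - x) by rewrite addrA subrK.
by apply: half_coneD; [rewrite subrKC | exact: half_cone_reflect].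
Qed.

Lemma half_cone_translate P P' eta :
  half_cone B P P' -> half_cone B P' (P' + eta) -> half_cone B P (P + eta).
Proof.
move=> PP' [x [Bx [b [b0]]]]; rewrite (addrC P') addrK => ->.
by apply: half_coneZ b0 _; exact: half_cone_apex_dir.
Qed.

Lemma half_cone_trans P P' Y :
  half_cone B P P' -> half_cone B P' Y -> half_cone B P Y.
Proof.
move=> PP' P'Y; have -> : Y = P + ((P' - P) + (Y - P')) by rewrite addrA !subrKC.
apply: half_coneD; first by rewrite subrKC.
by apply: half_cone_translate PP' _; rewrite subrKC.
Qed.

Hypothesis openB : open B.

Lemma open_half_cone P : open (half_cone B P).
Proof.
move=> Y [x [Bx [a [a0 YP]]]].
have /nbhs_ballP [d d0 xdB] := openB x Bx.
apply/nbhs_ballP; exists (a * d); first exact: mulr_gt0.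
move=> Z; rewrite -ball_normE /= => YZ.
exists (x + a^-1 *: (Y - Z)); split.
  apply: xdB; rewrite -ball_normE /= opprD addrA subrr add0r normrN normrZ.
  by rewrite gtr0_norm ?invr_gt0 // ltr_pdivrMl.
exists a; split => //.
rewrite opprD addrA scalerDr scalerN scalerA mulfV ?gt_eqF // scale1r -YP.
by rewrite opprB [RHS]addrC addrA subrK.
Qed.

Lemma closure_half_cone_sub P P' :
  half_cone B P P' -> closure (half_cone B P') `<=` half_cone B P.
Proof.
move=> PP' Y clY.
have /nbhs_ballP [e e0 P'eP] := open_half_cone P P' PP'.
have [Y' [P'Y' YY']] := clY _ (nbhsx_ballx Y e e0).
have P''P : half_cone B P (P' + (Y - Y')).
  apply: P'eP; rewrite -ball_normE /= opprD addrA subrr add0r normrN.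
  by rewrite -ball_normE in YY'.
have -> : Y = P + ((P' + (Y - Y') - P) + (Y' - P')).
  by rewrite addrA subrKC addrAC !subrKC.
apply: half_coneD; first by rewrite subrKC.
by apply: half_cone_translate PP' _; rewrite subrKC.
Qed.

End HalfCone.

Theorem proposition2 (R : realType) (c : 'rV[R]_3) (r : R) (P : 'rV[R]_3) :
  0 < r -> ~ eucl_ball c r P ->
  (forall P' : 'rV[R]_3, half_cone (eucl_ball c r) P P' ->
     closure (half_cone (eucl_ball c r) P') `<=` half_cone (eucl_ball c r) P)
  /\ (forall (P' eta : 'rV[R]_3), half_cone (eucl_ball c r) P P' ->
     half_cone (eucl_ball c r) P' (P' + eta) ->
     half_cone (eucl_ball c r) P (P + eta))
  /\ (forall P' : 'rV[R]_3, half_cone0 (eucl_ball c r) P P' ->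
     half_cone (eucl_ball c r) P' `<=` half_cone (eucl_ball c r) P).
Proof.
move=> _ _.
have convB := convex_eucl_ball c r.
have openB := open_eucl_ball c r.
split; [|split].
- by move=> P'; exact: closure_half_cone_sub.
- by move=> P' eta; exact: half_cone_translate.
- by move=> P' [PP'|->] Y; [exact: half_cone_trans|].
Qed.
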